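(* Let $\mathcal{Q}$ be a small quantaloid and let $D:\mathcal{J}\to\mathcal{Q}\text{-}\mathbf{Chu}$ be a diagram such that the colimit $W=\mathrm{colim}\,\mathrm{cod}D$ exists in $\mathcal{Q}\text{-}\mathbf{Cat}$. Then any cone $\gamma:\Delta X\to\mathrm{dom}D$ in $\mathcal{Q}\text{-}\mathbf{Cat}$ has a $\mathrm{dom}$-initial lifting $\Gamma:\Delta\phi\to D$ in $\mathcal{Q}\text{-}\mathbf{Chu}$ with $\phi:X\circ\!\!\rightarrow W$ and $\mathrm{dom}\,\Gamma=\gamma$. In particular, if $\gamma$ is a limit cone in $\mathcal{Q}\text{-}\mathbf{Cat}$, then $\Gamma$ is a limit cone in $\mathcal{Q}\text{-}\mathbf{Chu}$.
   Context: A quantaloid is a category enriched in complete lattices and sup-preserving maps. A $\mathcal{Q}$-category $(X,a)$: a set $X$ with extent $|\text{-}|:X\to\mathrm{ob}\,\mathcal{Q}$ and morphisms $a(x,y):|x|\to|y|$ with $1_{|x|}\le a(x,x)$, $a(y,z)\circ a(x,y)\le a(x,z)$. A $\mathcal{Q}$-functor $f:(X,a)\to(Y,b)$ is an extent-preserving map with $a(x,y)\le b(f(x),f(y))$; these form $\mathcal{Q}\text{-}\mathbf{Cat}$. A $\mathcal{Q}$-distributor $\phi:(X,a)\circ\!\!\rightarrow(Y,b)$ is a family $\phi(x,y):|x|\to|y|$ with $b(y,y')\circ\phi(x,y)\circ a(x',x)\le\phi(x',y')$. $\mathcal{Q}\text{-}\mathbf{Chu}$ is the category whose objects are $\mathcal{Q}$-distributors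 and whose morphisms $(f,g):\phi\to\psi$, for $\phi:X\circ\!\!\rightarrow W$, $\psi:Y\circ\!\!\rightarrow Z$, are pairs of $\mathcal{Q}$-functors $f:X\to Y$, $g:Z\to W$ with $\psi(f(x),z)=\phi(x,g(z))$ for all $x\in X$, $z\in Z$; composition is $(f',g')(f,g)=(f'f,gg')$. The functors $\mathrm{dom}:\mathcal{Q}\text{-}\mathbf{Chu}\to\mathcal{Q}\text{-}\mathbf{Cat}$, $(f,g)\mapsto f$, and $\mathrm{cod}:\mathcal{Q}\text{-}\mathbf{Chu}\to(\mathcal{Q}\text{-}\mathbf{Cat})^{\mathrm{op}}$, $(f,g)\mapsto g$; thus $\mathrm{cod}D$ is a diagram in $\mathcal{Q}\text{-}\mathbf{Cat}$ of shape $\mathcal{J}^{\mathrm{op}}$ and its colimit is taken in $\mathcal{Q}\text{-}\mathbf{Cat}$. For a functor $U:\mathcal{A}\to\mathcal{X}$ and diagram $D:\mathcal{J}\to\mathcal{A}$, a $U$-structured cone is an object $X$ of $\mathcal{X}$ with a natural transformation $\xi:\Delta X\to UD$; a lifting is an object $A$ with cone $\alpha:\Delta A\to D$ with $UA=X$, $U\alpha=\xi$; it is $U$-initial if for every cone $\beta:\Delta B\to D$ and every morphism $t:UB\to UA$ with $\xi\cdot\Delta t=U\beta$ there is exactly one $h:B\to A$ with $Uh=t$ and $\alpha\cdot\Delta h=\beta$. *)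

Set Implicit Arguments.
Unset Strict Implicit.

(* A (small) quantaloid: hom-sets are complete lattices (every subset, given as a
   predicate, has a least upper bound), composition is associative, unital and
   sup-preserving in each variable.  [qcomp g f] is "g o f" for f : a -> b, g : b -> c. *)
Record Quantaloid := {
  qob : Type;
  qhom : qob -> qob -> Type;
  qle : forall a b, qhom a b -> qhom a b -> Prop;
  qsup : forall a b, (qhom a b -> Prop) -> qhom a b;
  qcomp : forall a b c, qhom b c -> qhom a b -> qhom a c;
  qid : forall a, qhom a a;
  qle_refl : forall a b (f : qhom a b), qle f f;
  qle_trans : forall a b (f g h : qhom a b), qle f g -> qle g h -> qle f h;
  qle_antisym : forall a b (f g : qhom a b), qle f g -> qle g f -> f = g;
  qsup_ub : forall a b (S : qhom a b -> Prop) f, S f -> qle f (qsup S);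
  qsup_least : forall a b (S : qhom a b -> Prop) u,
      (forall f, S f -> qle f u) -> qle (qsup S) u;
  qcomp_assoc : forall a b c d (h : qhom c d) (g : qhom b c) (f : qhom a b),
      qcomp h (qcomp g f) = qcomp (qcomp h g) f;
  qcomp_id_l : forall a b (f : qhom a b), qcomp (qid b) f = f;
  qcomp_id_r : forall a b (f : qhom a b), qcomp f (qid a) = f;
  qcomp_sup_r : forall a b c (g : qhom b c) (S : qhom a b -> Prop),
      qcomp g (qsup S)
      = qsup (fun h => exists f, S f /\ h = qcomp g f);
  qcomp_sup_l : forall a b c (S : qhom b c -> Prop) (f : qhom a b),
      qcomp (qsup S) f
      = qsup (fun h => exists g, S g /\ h = qcomp g f)
}.

Arguments qhom : clear implicits.
Arguments qle {Q a b} : rename.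
Arguments qsup {Q a b} : rename.
Arguments qcomp {Q a b c} : rename.
Arguments qid {Q} a : rename.

(* A Q-category (X, a): the set X with extent |-| : X -> ob Q is encoded as the
   family of fibres [qcob A] = { x in X | |x| = A }; [qchom x y] = a(x,y) : |x| -> |y|. *)
Record QCat (Q : Quantaloid) := {
  qcob : qob Q -> Type;
  qchom : forall A B, qcob A -> qcob B -> qhom Q A B;
  qc_refl : forall A (x : qcob A), qle (qid A) (qchom x x);
  qc_trans : forall A B C (x : qcob A) (y : qcob B) (z : qcob C),
      qle (qcomp (qchom y z) (qchom x y)) (qchom x z)
}.
Arguments qcob {Q} X A : rename.
Arguments qchom {Q} X {A B} x y : rename.

Record QFun (Q : Quantaloid) (X Y : QCat Q) := {
  qfmap :> forall A, qcob X A -> qcob Y A;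
  qf_mono : forall A B (x : qcob X A) (y : qcob X B),
      qle (qchom X x y) (qchom Y (qfmap x) (qfmap y))
}.
Arguments qfmap {Q X Y} f A x : rename.

Record QDist (Q : Quantaloid) (X Y : QCat Q) := {
  qdmap :> forall A B, qcob X A -> qcob Y B -> qhom Q A B;
  qd_ax : forall A A' B B' (x : qcob X A) (x' : qcob X A') (y : qcob Y B) (y' : qcob Y B'),
      qle (qcomp (qchom Y y y') (qcomp (qdmap x y) (qchom X x' x))) (qdmap x' y')
}.
Arguments qdmap {Q X Y} p {A B} x y : rename.

Record ChuOb (Q : Quantaloid) := MkChuOb {
  cdom : QCat Q;
  ccod : QCat Q;
  cdist : QDist cdom ccod
}.

Record ChuHom (Q : Quantaloid) (P P' : ChuOb Q) := {
  chf : QFun (cdom P) (cdom P');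
  chg : QFun (ccod P') (ccod P);
  ch_ax : forall A B (x : qcob (cdom P) A) (z : qcob (ccod P') B),
      qdmap (cdist P') (qfmap chf A x) z = qdmap (cdist P) x (qfmap chg B z)
}.

Definition chu_eq (Q : Quantaloid) (P P' : ChuOb Q) (h h' : ChuHom P P') : Prop :=
  (forall A x, qfmap (chf h) A x = qfmap (chf h') A x) /\
  (forall B z, qfmap (chg h) B z = qfmap (chg h') B z).

(* [chu_comp_eq g h k] : "g o h = k" in Q-Chu, composition (f',g')(f,g) = (f'f, g g'). *)
Definition chu_comp_eq (Q : Quantaloid) (P0 P1 P2 : ChuOb Q)
    (g : ChuHom P1 P2) (h : ChuHom P0 P1) (k : ChuHom P0 P2) : Prop :=
  (forall A x, qfmap (chf g) A (qfmap (chf h) A x) = qfmap (chf k) A x) /\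
  (forall B z, qfmap (chg h) B (qfmap (chg g) B z) = qfmap (chg k) B z).

Record SmallCat := {
  jo : Type;
  jh : jo -> jo -> Type;
  jcomp : forall i j k, jh j k -> jh i j -> jh i k;
  jid : forall i, jh i i;
  jcomp_assoc : forall i j k l (w : jh k l) (v : jh j k) (u : jh i j),
      jcomp w (jcomp v u) = jcomp (jcomp w v) u;
  jcomp_id_l : forall i j (u : jh i j), jcomp (jid j) u = u;
  jcomp_id_r : forall i j (u : jh i j), jcomp u (jid i) = u
}.
Arguments jh : clear implicits.
Arguments jcomp {J i j k} : rename.
Arguments jid {J} i : rename.

Record ChuDiagram (Q : Quantaloid) (J : SmallCat) := {
  dob : jo J -> ChuOb Q;
  dhom : forall i j, jh J i j -> ChuHom (dob i) (dob j);
  dhom_id : forall i,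
      (forall A x, qfmap (chf (dhom (jid i))) A x = x) /\
      (forall B z, qfmap (chg (dhom (jid i))) B z = z);
  dhom_comp : forall i j k (v : jh J j k) (u : jh J i j),
      chu_comp_eq (dhom v) (dhom u) (dhom (jcomp v u))
}.
Arguments dob {Q J} D j : rename.
Arguments dhom {Q J} D {i j} u : rename.

Section Diagrams.
Variables (Q : Quantaloid) (J : SmallCat) (D : ChuDiagram Q J).

(* W with w_j : cod(D j) -> W is a colimit in Q-Cat of cod D : J^op -> Q-Cat
   (cod D sends u : i -> j to the second component g_u : cod(D j) -> cod(D i)). *)
Definition IsCodCocone (V : QCat Q) (v : forall j, QFun (ccod (dob D j)) V) : Prop :=
  forall i j (u : jh J i j) B z,
    qfmap (v i) B (qfmap (chg (dhom D u)) B z) = qfmap (v j) B z.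

Definition IsColimitCod (W : QCat Q) (w : forall j, QFun (ccod (dob D j)) W) : Prop :=
  IsCodCocone w /\
  forall (V : QCat Q) (v : forall j, QFun (ccod (dob D j)) V), IsCodCocone v ->
    exists h : QFun W V,
      (forall j B z, qfmap h B (qfmap (w j) B z) = qfmap (v j) B z) /\
      (forall h' : QFun W V,
         (forall j B z, qfmap h' B (qfmap (w j) B z) = qfmap (v j) B z) ->
         forall B y, qfmap h' B y = qfmap h B y).

Definition IsDomCone (X : QCat Q) (g : forall j, QFun X (cdom (dob D j))) : Prop :=
  forall i j (u : jh J i j) A x,
    qfmap (chf (dhom D u)) A (qfmap (g i) A x) = qfmap (g j) A x.

Definition IsDomLimit (X : QCat Q) (g : forall j, QFun X (cdom (dob D j))) : Prop :=
  IsDomCone g /\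
  forall (Y : QCat Q) (b : forall j, QFun Y (cdom (dob D j))), IsDomCone b ->
    exists t : QFun Y X,
      (forall j A y, qfmap (g j) A (qfmap t A y) = qfmap (b j) A y) /\
      (forall t' : QFun Y X,
         (forall j A y, qfmap (g j) A (qfmap t' A y) = qfmap (b j) A y) ->
         forall A y, qfmap t' A y = qfmap t A y).

Definition IsChuCone (P : ChuOb Q) (G : forall j, ChuHom P (dob D j)) : Prop :=
  forall i j (u : jh J i j), chu_comp_eq (dhom D u) (G i) (G j).

Definition IsChuLimit (P : ChuOb Q) (G : forall j, ChuHom P (dob D j)) : Prop :=
  IsChuCone G /\
  forall (P' : ChuOb Q) (B : forall j, ChuHom P' (dob D j)), IsChuCone B ->
    exists h : ChuHom P' P,
      (forall j, chu_comp_eq (G j) h (B j)) /\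
      (forall h' : ChuHom P' P, (forall j, chu_comp_eq (G j) h' (B j)) -> chu_eq h' h).

Definition IsDomInitial (P : ChuOb Q) (G : forall j, ChuHom P (dob D j)) : Prop :=
  forall (P' : ChuOb Q) (B : forall j, ChuHom P' (dob D j)), IsChuCone B ->
  forall t : QFun (cdom P') (cdom P),
    (forall j A y, qfmap (chf (G j)) A (qfmap t A y) = qfmap (chf (B j)) A y) ->
    exists h : ChuHom P' P,
      ((forall A y, qfmap (chf h) A y = qfmap t A y) /\
       (forall j, chu_comp_eq (G j) h (B j))) /\
      (forall h' : ChuHom P' P,
         (forall A y, qfmap (chf h') A y = qfmap t A y) ->
         (forall j, chu_comp_eq (G j) h' (B j)) -> chu_eq h' h).

End Diagrams.

Arguments IsCodCocone {Q J} D V v.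
Arguments IsColimitCod {Q J} D W w.
Arguments IsDomCone {Q J} D X g.
Arguments IsDomLimit {Q J} D X g.
Arguments IsChuCone {Q J} D P G.
Arguments IsChuLimit {Q J} D P G.
Arguments IsDomInitial {Q J} D P G.
Arguments MkChuOb {Q cdom ccod} cdist.

From Stdlib Require Import FunctionalExtensionality ProofIrrelevance.

Set Implicit Arguments.
Unset Strict Implicit.

(* A distributor X o-> W is the same thing as a Q-functor from W into the
   Q-category P X of presheaves on X.  The presheaves z |-> D_j(gamma_j -, z)
   form a cocone over cod D, so the colimit W yields a functor W -> P X, i.e. the
   distributor phi, and the Chu condition for (gamma_j, w_j) is precisely the
   factorisation through the colimit.  For dom-initiality, the cod-legs of a
   competing cone induce k : cod P' -> W, and (t, k) satisfies the Chu condition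
   because, again through P X, a distributor into W is determined by its
   restrictions along the legs w_j. *)

Section QuantaloidOrder.
Variable Q : Quantaloid.

Lemma qle_eq a b (f g : qhom Q a b) : f = g -> qle f g.
Proof. intros ->; apply qle_refl. Qed.

Lemma qsup_pair_le a b (f f' : qhom Q a b) :
  qle f f' -> qsup (fun h => h = f \/ h = f') = f'.
Proof.
  intros Hff'. apply qle_antisym.
  - apply qsup_least. intros h [-> | ->]; [exact Hff' | apply qle_refl].
  - apply qsup_ub. now right.
Qed.

Lemma qcomp_mono_r a b c (g : qhom Q b c) (f f' : qhom Q a b) :
  qle f f' -> qle (qcomp g f) (qcomp g f').
Proof.
  intros Hff'. rewrite <- (qsup_pair_le Hff'), qcomp_sup_r.
  apply qsup_ub. exists f. auto.
Qed.

Lemma qcomp_mono_l a b c (g g' : qhom Q b c) (f : qhom Q a b) :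
  qle g g' -> qle (qcomp g f) (qcomp g' f).
Proof.
  intros Hgg'. rewrite <- (qsup_pair_le Hgg'), qcomp_sup_l.
  apply qsup_ub. exists g. auto.
Qed.

End QuantaloidOrder.

Section Presheaves.
Variable Q : Quantaloid.

Definition qfcomp (X Y Z : QCat Q) (g : QFun Y Z) (f : QFun X Y) : QFun X Z.
Proof.
  refine {| qfmap := fun A x => qfmap g A (qfmap f A x) |}.
  intros. eapply qle_trans; apply qf_mono.
Defined.

Lemma qd_le_cod (X Y : QCat Q) (p : QDist X Y) A B B'
    (x : qcob X A) (y : qcob Y B) (y' : qcob Y B') :
  qle (qcomp (qchom Y y y') (qdmap p x y)) (qdmap p x y').
Proof.
  eapply qle_trans; [| apply (qd_ax p x x y y')].
  apply qcomp_mono_r. eapply qle_trans; [apply qle_eq; symmetry; apply qcomp_id_r |].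
  apply qcomp_mono_r, qc_refl.
Qed.

Lemma qd_le_dom (X Y : QCat Q) (p : QDist X Y) A A' B
    (x : qcob X A) (x' : qcob X A') (y : qcob Y B) :
  qle (qcomp (qdmap p x y) (qchom X x' x)) (qdmap p x' y).
Proof.
  eapply qle_trans; [| apply (qd_ax p x x' y y)].
  eapply qle_trans; [apply qle_eq; symmetry; apply qcomp_id_l |].
  apply qcomp_mono_l, qc_refl.
Qed.

Definition dist_precomp (X Y Z : QCat Q) (p : QDist Y Z) (f : QFun X Y) : QDist X Z.
Proof.
  refine {| qdmap := fun A B x z => qdmap p (qfmap f A x) z |}.
  intros A A' B B' x x' z z'.
  eapply qle_trans; [| apply (qd_ax p (qfmap f A x) (qfmap f A' x') z z')].
  apply qcomp_mono_r, qcomp_mono_r, qf_mono.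
Defined.

Definition dist_postcomp (Y Z W : QCat Q) (p : QDist Y Z) (k : QFun W Z) : QDist Y W.
Proof.
  refine {| qdmap := fun A B y u => qdmap p y (qfmap k B u) |}.
  intros A A' B B' y y' u u'.
  eapply qle_trans; [| apply (qd_ax p y y' (qfmap k B u) (qfmap k B' u'))].
  apply qcomp_mono_l, qf_mono.
Defined.

Record Psh (Y : QCat Q) (B : qob Q) := {
  pmap : forall A, qcob Y A -> qhom Q A B;
  pax : forall A A' (y : qcob Y A) (y' : qcob Y A'),
      qle (qcomp (pmap y) (qchom Y y' y)) (pmap y')
}.
Arguments pmap {Y B} m {A} y : rename.
Arguments pax {Y B} m {A A'} y y' : rename.

Lemma psh_ext (Y : QCat Q) B (m l : Psh Y B) :
  (forall A (y : qcob Y A), pmap m y = pmap l y) -> m = l.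
Proof.
  destruct m as [m Hm], l as [l Hl]; simpl. intros Hml.
  assert (m = l) as <-.
  { apply functional_extensionality_dep; intros A.
    apply functional_extensionality; intros y. apply Hml. }
  f_equal. apply proof_irrelevance.
Qed.

Definition psh_hom (Y : QCat Q) B C (m : Psh Y B) (l : Psh Y C) : qhom Q B C :=
  qsup (fun f => forall A (y : qcob Y A), qle (qcomp f (pmap m y)) (pmap l y)).

Lemma psh_hom_le (Y : QCat Q) B C (m : Psh Y B) (l : Psh Y C) A (y : qcob Y A) :
  qle (qcomp (psh_hom m l) (pmap m y)) (pmap l y).
Proof.
  unfold psh_hom. rewrite qcomp_sup_l. apply qsup_least.
  intros h [f [Hf ->]]. apply Hf.
Qed.

Lemma psh_hom_ge (Y : QCat Q) B C (m : Psh Y B) (l : Psh Y C) (f : qhom Q B C) :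
  (forall A (y : qcob Y A), qle (qcomp f (pmap m y)) (pmap l y)) ->
  qle f (psh_hom m l).
Proof. intros Hf. now apply qsup_ub. Qed.

Definition PshCat (Y : QCat Q) : QCat Q.
Proof.
  refine {| qcob := Psh Y; qchom := fun B C m l => psh_hom m l |}.
  - intros B m. apply psh_hom_ge. intros A y. rewrite qcomp_id_l. apply qle_refl.
  - intros B C E m l n. apply psh_hom_ge. intros A y.
    rewrite <- qcomp_assoc. eapply qle_trans; [apply qcomp_mono_r, psh_hom_le |].
    apply psh_hom_le.
Defined.

Definition dist_to_psh (Y W : QCat Q) (p : QDist Y W) : QFun W (PshCat Y).
Proof.
  unshelve refine {| qfmap := fun B u =>
    ({| pmap := fun A y => qdmap p y u |} : qcob (PshCat Y) B) |}.
  - intros A A' y y'. apply qd_le_dom.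
  - intros B B' u u'. simpl. apply psh_hom_ge. intros A y. apply qd_le_cod.
Defined.

Definition psh_to_dist (X W : QCat Q) (F : QFun W (PshCat X)) : QDist X W.
Proof.
  refine {| qdmap := fun A B x u => pmap (qfmap F B u) x |}.
  intros A A' B B' x x' u u'.
  eapply qle_trans; [apply qcomp_mono_r, (pax (qfmap F B u) x x') |].
  eapply qle_trans; [apply qcomp_mono_l, (qf_mono F u u') |].
  apply psh_hom_le.
Defined.

End Presheaves.

Arguments pmap {Q Y B} m {A} y : rename.

Section ColimitOfCodomains.
Variables (Q : Quantaloid) (J : SmallCat) (D : ChuDiagram Q J).
Variables (W : QCat Q) (w : forall j, QFun (ccod (dob D j)) W).
Hypothesis Hw : IsColimitCod D W w.

Lemma colimit_cod_ext (V : QCat Q) (h1 h2 : QFun W V) :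
  (forall j B z, qfmap h1 B (qfmap (w j) B z) = qfmap h2 B (qfmap (w j) B z)) ->
  forall B y, qfmap h1 B y = qfmap h2 B y.
Proof.
  intros Hh12 B y. destruct Hw as [Hcocone Huniv].
  destruct (Huniv V (fun j => qfcomp h1 (w j))) as [h [_ Hh_unique]].
  { intros i j u B' z. simpl. now rewrite Hcocone. }
  rewrite (Hh_unique h1), (Hh_unique h2); try reflexivity.
  intros j B' z. simpl. now rewrite Hh12.
Qed.

Lemma colimit_cod_dist_ext (Y : QCat Q) (p1 p2 : QDist Y W) :
  (forall j A B (y : qcob Y A) (z : qcob (ccod (dob D j)) B),
     qdmap p1 y (qfmap (w j) B z) = qdmap p2 y (qfmap (w j) B z)) ->
  forall A B (y : qcob Y A) (u : qcob W B), qdmap p1 y u = qdmap p2 y u.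
Proof.
  intros Hp12 A B y u.
  change (pmap (qfmap (dist_to_psh p1) B u) y = pmap (qfmap (dist_to_psh p2) B u) y).
  rewrite (@colimit_cod_ext _ (dist_to_psh p1) (dist_to_psh p2)); [reflexivity |].
  intros j B' z. apply psh_ext. intros A' y'. apply Hp12.
Qed.

End ColimitOfCodomains.

Lemma dom_initial_limit (Q : Quantaloid) (J : SmallCat) (D : ChuDiagram Q J)
    (P : ChuOb Q) (G : forall j, ChuHom P (dob D j)) :
  IsChuCone D P G -> IsDomInitial D P G ->
  IsDomLimit D (cdom P) (fun j => chf (G j)) -> IsChuLimit D P G.
Proof.
  intros Hcone Hinit [_ Hlim]. split; [exact Hcone |].
  intros P' B HB.
  destruct (Hlim (cdom P') (fun j => chf (B j))) as [t [Ht Ht_unique]].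
  { intros i j u A y. apply (proj1 (HB i j u)). }
  destruct (Hinit P' B HB t Ht) as [h [[_ Hh] Hh_unique]].
  exists h. split; [exact Hh |].
  intros h' Hh'. apply Hh_unique; [| exact Hh'].
  apply Ht_unique. intros j A y. apply (proj1 (Hh' j)).
Qed.

Section Lifting.
Variables (Q : Quantaloid) (J : SmallCat) (D : ChuDiagram Q J).
Variables (W : QCat Q) (w : forall j, QFun (ccod (dob D j)) W).
Hypothesis Hw : IsColimitCod D W w.
Variables (X : QCat Q) (gamma : forall j, QFun X (cdom (dob D j))).
Hypothesis Hgamma : IsDomCone D X gamma.

Definition leg_psh j : QFun (ccod (dob D j)) (PshCat X) :=
  dist_to_psh (dist_precomp (cdist (dob D j)) (gamma j)).

Lemma leg_psh_cocone : IsCodCocone D (PshCat X) leg_psh.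
Proof.
  intros i j u B z. apply psh_ext. intros A x. simpl.
  now rewrite <- (ch_ax (dhom D u)), Hgamma.
Qed.

Variable h : QFun W (PshCat X).
Hypothesis Hh : forall j B z, qfmap h B (qfmap (w j) B z) = qfmap (leg_psh j) B z.

Definition lift_dist : QDist X W := psh_to_dist h.

Lemma lift_chu_ax j A B (x : qcob X A) (z : qcob (ccod (dob D j)) B) :
  qdmap (cdist (dob D j)) (qfmap (gamma j) A x) z = qdmap lift_dist x (qfmap (w j) B z).
Proof. simpl. now rewrite Hh. Qed.

Definition lift_leg j : ChuHom (MkChuOb lift_dist) (dob D j) :=
  @Build_ChuHom Q (MkChuOb lift_dist) (dob D j) (gamma j) (w j) (lift_chu_ax (j:=j)).

Lemma lift_leg_cone : IsChuCone D (MkChuOb lift_dist) lift_leg.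
Proof.
  intros i j u. split; simpl; intros.
  - apply Hgamma.
  - apply (proj1 Hw).
Qed.

Lemma lift_leg_dom_initial : IsDomInitial D (MkChuOb lift_dist) lift_leg.
Proof.
  intros P' B HB t Ht. simpl in Ht.
  destruct (proj2 Hw (ccod P') (fun j => chg (B j))) as [k [Hk Hk_unique]].
  { intros i j u B' z. apply (proj2 (HB i j u)). }
  assert (Hchu : forall A B' (y : qcob (cdom P') A) (u : qcob W B'),
    qdmap lift_dist (qfmap t A y) u = qdmap (cdist P') y (qfmap k B' u)).
  { apply (colimit_cod_dist_ext Hw (p1 := dist_precomp lift_dist t)
                                   (p2 := dist_postcomp (cdist P') k)).
    intros j A B' y z. simpl. rewrite Hh, Hk. simpl. rewrite Ht. apply (ch_ax (B j)). }
  exists (@Build_ChuHom Q P' (MkChuOb lift_dist) t k Hchu).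
  split; [split |].
  - reflexivity.
  - intros j. split; simpl; intros; [apply Ht | apply Hk].
  - intros h' Hh't Hh'B. split; simpl; [exact Hh't |].
    apply Hk_unique. intros j B' z. apply (proj2 (Hh'B j)).
Qed.

End Lifting.

Theorem theorem3p4 (Q : Quantaloid) (J : SmallCat) (D : ChuDiagram Q J)
    (W : QCat Q) (w : forall j, QFun (ccod (dob D j)) W)
    (Hw : IsColimitCod D W w)
    (X : QCat Q) (gamma : forall j, QFun X (cdom (dob D j)))
    (Hgamma : IsDomCone D X gamma) :
  exists (phi : QDist X W) (G : forall j, ChuHom (MkChuOb phi) (dob D j)),
    (forall j A x, qfmap (chf (G j)) A x = qfmap (gamma j) A x) /\
    IsChuCone D (MkChuOb phi) G /\
    IsDomInitial D (MkChuOb phi) G /\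
    (IsDomLimit D X gamma -> IsChuLimit D (MkChuOb phi) G).
Proof.
  destruct (proj2 Hw (PshCat X) (leg_psh gamma) (leg_psh_cocone Hgamma))
    as [h [Hh _]].
  exists (lift_dist h), (lift_leg Hh).
  assert (Hcone := lift_leg_cone Hw Hgamma Hh).
  assert (Hinit := lift_leg_dom_initial Hw (Hh := Hh)).
  split; [reflexivity |]. split; [exact Hcone |]. split; [exact Hinit |].
  exact (dom_initial_limit Hcone Hinit).
Qed.
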